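(* Let $\mathcal{L}$ and $\mathcal{L}'$ be lattices and $u,u':\mathbb{N}\to\mathbb{N}$. If $\mathcal{L}$ is $O(u(n))$ and $\mathcal{L}'$ is $O(u'(n))$, then the product lattice $\mathcal{L}\times\mathcal{L}'$ is $O(u(n)u'(n))$.
   Context: A lattice means a partially ordered set $(\mathcal{L},\sqsubseteq)$ with least element $\bot$ in which any two elements have a least upper bound $\sqcup$; $\bigsqcup S$ denotes the least upper bound of a finite set ($\bigsqcup\emptyset=\bot$). The product lattice $\mathcal{L}\times\mathcal{L}'$ has pairs $(\ell,\ell')$ with $\ell\in\mathcal{L},\ell'\in\mathcal{L}'$ ordered componentwise: $(\ell_0,\ell_1)\sqsubseteq(\jmath_0,\jmath_1)$ iff $\ell_0\sqsubseteq\jmath_0$ and $\ell_1\sqsubseteq\jmath_1$. The closure set of a finite $S$ is $C(S)=\{\bigsqcup S' : S'\subseteq S\}$ and $CS_{\mathcal{L}}(n)=\max\{|C(S)| : S\subseteq\mathcal{L}\text{ finite}, |S|\le n\}$. For $f,g:\mathbb{N}\to\mathbb{N}$, $f$ is $O(g)$ iff there exist $N_0\in\mathbb{N}$ and rational $C>0$ with $f(n)\le Cg(n)$ for all $n\ge N_0$. A lattice $\mathcal{L}$ is $O(f(n))$ iff $CS_{\mathcal{L}}(n)$ is $O(f(n))$. *)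

From HB Require Import structures.
From mathcomp Require Import all_boot all_order all_algebra.
From mathcomp Require Import finmap.
From mathcomp Require Import boolp.
Set Implicit Arguments. Unset Strict Implicit. Unset Printing Implicit Defensive.
Import Order.TTheory GRing.Theory Num.Theory.
Local Open Scope fset_scope.
Local Open Scope order_scope.

(* A lattice in the sense of the paper: a partial order with least element
   \bot in which any two elements have a least upper bound (join):
   a [bJoinSemilatticeType d]. *)

Definition closure_set {d : Order.disp_t} {L : bJoinSemilatticeType d}
  (S : {fset L}) : {fset L} :=
  [fset (\join_(x <- enum_fset S') x) | S' : {fset L} in fpowerset S].

(* CS_L(n) = max { |C(S)| : S finite, |S| <= n }.  Since |C(S)| <= 2^|S| <= 2^n,
   this maximum is taken among the k <= 2^n. *)
Definition CS {d : Order.disp_t} (L : bJoinSemilatticeType d) (n : nat) : nat :=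
  \max_(k < (2 ^ n).+1 |
        `[< exists S : {fset L}, (#|` S| <= n)%N /\ #|` closure_set S| = k >]) k.

Definition bigO (f g : nat -> nat) : Prop :=
  exists (N0 : nat) (C : rat), (0 < C)%R /\
    forall n : nat, (N0 <= n)%N -> ((f n)%:R <= C * (g n)%:R)%R.

Definition lattice_bigO {d : Order.disp_t} (L : bJoinSemilatticeType d)
  (f : nat -> nat) : Prop := bigO (CS L) f.

From HB Require Import structures.
From mathcomp Require Import all_boot all_order all_algebra.
From mathcomp Require Import finmap boolp.

(* A join of elements of L * L' is computed componentwise, so every element of
   C(S), for S a finite subset of L * L', lies in C(S.1) * C(S.2), where S.1 and
   S.2 are the projections of S; these have at most |S| elements.  Hence
   CS_{L * L'}(n) <= CS_L(n) * CS_{L'}(n), and big-O bounds multiply. *)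

Set Implicit Arguments.
Unset Strict Implicit.
Unset Printing Implicit Defensive.

Import Order.TTheory GRing.Theory Num.Theory.

Section FsetCardinals.
Local Open Scope fset_scope.

Lemma size_enum_finmem (K : choiceType) (A : {fset K}) :
  size (enum_finmem (mem A)) = #|` A|.
Proof. by rewrite -card_fset card_imfset. Qed.

Lemma card_fsetM (K K' : choiceType) (A : {fset K}) (B : {fset K'}) :
  #|` A `*` B| = (#|` A| * #|` B|)%N.
Proof.
rewrite (perm_size (enum_imfset2 _ _)); last by move=> [? ?] [? ?] _ _ [-> ->].
by rewrite size_allpairs !size_enum_finmem.
Qed.

Lemma card_imfset_leq (K K' : choiceType) (f : K -> K') (A : {fset K}) :
  (#|` [fset f x | x in A]| <= #|` A|)%N.
Proof. by rewrite -size_enum_finmem leq_imfset_card. Qed.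

End FsetCardinals.

Section ClosureSet.
Local Open Scope fset_scope.
Local Open Scope order_scope.

Lemma joins_imfset {d : Order.disp_t} (L : bJoinSemilatticeType d)
  (T : choiceType) (f : T -> L) (A : {fset T}) :
  \join_(y <- enum_fset [fset f x | x in A]) y = \join_(x <- enum_fset A) f x.
Proof.
apply/eqP; rewrite eq_le; apply/andP; split.
  by apply/joinsP_seq => _ /imfsetP [x /= xA ->] _; apply: joins_sup_seq.
by apply/joinsP_seq => x xA _; apply: joins_sup_seq; rewrite ?in_imfset.
Qed.

Lemma mem_closure_set_morph {d d' : Order.disp_t}
  (L : bJoinSemilatticeType d) (M : bJoinSemilatticeType d') (f : L -> M)
  (fJ : {morph f : x y / x `|` y}) (f0 : f \bot = \bot) (S : {fset L}) x :
  x \in closure_set S -> f x \in closure_set [fset f y | y in S].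
Proof.
case/imfsetP => S' /=; rewrite fpowersetE => sub_S'S ->.
apply/imfsetP; exists [fset f y | y in S']; last first.
  by rewrite joins_imfset (big_morph f fJ f0).
by rewrite fpowersetE; apply: subset_imfset; apply/fsubsetP.
Qed.

Lemma card_closure_set_leq {d : Order.disp_t} (L : bJoinSemilatticeType d)
  (S : {fset L}) :
  (#|` closure_set S| <= 2 ^ #|` S|)%N.
Proof. by rewrite -card_fpowerset card_imfset_leq. Qed.

Lemma closure_set_prod_sub {d d' : Order.disp_t}
  (L : bJoinSemilatticeType d) (L' : bJoinSemilatticeType d')
  (S : {fset (L *p L')%type}) :
  closure_set S `<=`
    closure_set [fset p.1 | p in S] `*` closure_set [fset p.2 | p in S].
Proof.
apply/fsubsetP => x xS; rewrite in_fsetM.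
by rewrite !(mem_closure_set_morph (fun _ _ => erefl) erefl xS).
Qed.

End ClosureSet.

Section ClosureSize.
Local Open Scope fset_scope.
Variables (d : Order.disp_t) (L : bJoinSemilatticeType d).

Lemma card_closure_set_leq_CS (n : nat) (S : {fset L}) :
  (#|` S| <= n)%N -> (#|` closure_set S| <= CS L n)%N.
Proof.
move=> Sn.
have ltCS : (#|` closure_set S| < (2 ^ n).+1)%N.
  by rewrite ltnS (leq_trans (card_closure_set_leq S)) // leq_pexp2l.
apply: (@leq_bigmax_cond _ _ (fun k : 'I_(2 ^ n).+1 => nat_of_ord k) (Ordinal ltCS)).
by apply/asboolP; exists S.
Qed.

Lemma CS_leq (n m : nat) :
  (forall S : {fset L}, (#|` S| <= n)%N -> (#|` closure_set S| <= m)%N) ->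
  (CS L n <= m)%N.
Proof. by move=> closure_leq; apply/bigmax_leqP => k /asboolP [S [/closure_leq + <-]]. Qed.

End ClosureSize.

Lemma CS_prod_leq {d d' : Order.disp_t}
  (L : bJoinSemilatticeType d) (L' : bJoinSemilatticeType d') (n : nat) :
  (CS (L *p L')%type n <= CS L n * CS L' n)%N.
Proof.
apply: CS_leq => S Sn.
rewrite (leq_trans (fsubset_leq_card (closure_set_prod_sub S))) // card_fsetM.
by rewrite leq_mul // card_closure_set_leq_CS // (leq_trans (card_imfset_leq _ _)).
Qed.

Section BigO.
Local Open Scope ring_scope.

Lemma bigO_leq (f h g : nat -> nat) :
  (forall n, (f n <= h n)%N) -> bigO h g -> bigO f g.
Proof.
move=> f_le_h [N0 [C [C_gt0 hC]]]; exists N0, C; split=> // n n_ge.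
by rewrite (le_trans _ (hC n n_ge)) // ler_nat.
Qed.

Lemma bigO_mul (f g f' g' : nat -> nat) :
  bigO f g -> bigO f' g' ->
  bigO (fun n => (f n * f' n)%N) (fun n => (g n * g' n)%N).
Proof.
move=> [N0 [C [C_gt0 fC]]] [N1 [C' [C'_gt0 fC']]].
exists (maxn N0 N1), (C * C'); split; first exact: mulr_gt0.
move=> n; rewrite geq_max => /andP [n_ge0 n_ge1].
by rewrite !natrM mulrACA ler_pM ?fC ?fC'.
Qed.

End BigO.

Theorem mainTheorem3 (d d' : Order.disp_t)
  (L : bJoinSemilatticeType d) (L' : bJoinSemilatticeType d')
  (u u' : nat -> nat) :
  lattice_bigO L u -> lattice_bigO L' u' ->
  lattice_bigO (L *p L')%type (fun n => (u n * u' n)%N).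
Proof.
move=> CS_u CS'_u'.
apply: (bigO_leq (@CS_prod_leq _ _ L L')).
exact: bigO_mul.
Qed.
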